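(* Let $n,m\in\mathbb{N}$. If $X\subseteq\mathbb{N}$ is finite, $(\omega^{n+m}+1)$-large and $\min X\ge3$, then there exists $Y\subseteq X$ such that $Y$ is $\omega^n$-large and $\omega^m$-sparse. In particular, if $X$ is finite, $(\omega^{n+3}+1)$-large and $\min X\ge 3$, then there exists $Y\subseteq X$ which is $\omega^n$-large and exp-sparse.
   Context: Ordinals below $\omega^\omega$ are in Cantor normal form; $\omega^j\cdot m$ = sum of $m$ copies of $\omega^j$. For $m\in\mathbb{N}$: $0[m]=0$, $(\beta+1)[m]=\beta$, $(\beta+\omega^{n})[m]=\beta+\omega^{n-1}\cdot m$ for $n\ge1$. A finite $X=\{x_0<\dots<x_{\ell-1}\}\subseteq\mathbb{N}$ is $\alpha$-large if $\alpha[x_0]\cdots[x_{\ell-1}]=0$. A set $X$ is $\alpha$-sparse if for all $x<y$ in $X$ the interval $(x,y]=\{z\in\mathbb{N}:x<z\le y\}$ is $\alpha$-large. A set $X$ with $\min X\ge3$ is exp-sparse if for all $x<y$ in $X$, $4^x<y$. *)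

From mathcomp Require Import all_boot.
Set Implicit Arguments. Unset Strict Implicit. Unset Printing Implicit Defensive.

(* Ordinals below omega^omega in Cantor normal form:
   the list [:: k_1; k_2; ...; k_r] with k_1 >= k_2 >= ... >= k_r
   denotes omega^k_1 + omega^k_2 + ... + omega^k_r; [::] denotes 0. *)
Definition cnf := seq nat.

Definition cnf_omega (k : nat) : cnf := [:: k].
Definition cnf_succ (a : cnf) : cnf := rcons a 0.

(* Fundamental sequence: 0[m] = 0, (b+1)[m] = b,
   (b + omega^(k+1))[m] = b + omega^k * m. *)
Definition fs (a : cnf) (m : nat) : cnf :=
  match rev a with
  | [::] => [::]
  | 0 :: r => rev r
  | k.+1 :: r => rev r ++ nseq m k
  end.

(* A finite set X = {x_0 < ... < x_{l-1}} is represented by its increasing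
   enumeration (a strictly increasing sequence). *)
Definition large (a : cnf) (X : seq nat) : bool :=
  foldl fs a X == [::].

Definition interval_oc (x y : nat) : seq nat := iota x.+1 (y - x).

Definition sparse (a : cnf) (X : seq nat) : Prop :=
  forall x y, x \in X -> y \in X -> x < y -> large a (interval_oc x y).

Definition exp_sparse (X : seq nat) : Prop :=
  (forall x, x \in X -> 3 <= x) /\
  (forall x y, x \in X -> y \in X -> x < y -> 4 ^ x < y).

From mathcomp Require Import all_boot zify.
Set Implicit Arguments. Unset Strict Implicit. Unset Printing Implicit Defensive.

(* Let x0 = min X and build Y = {y_0 = x0 < y_1 < ...} greedily, y_(i+1) being the least
   element of X with X ∩ (y_i, y_(i+1)] ω^m-large; such a Y is ω^m-sparse.  Since X above x0
   is ω^(n+m)-large, X above y_0 is (ω^m·b_0 + ω^m)-large for b_0 = ω^n[x0], and this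
   invariant propagates with b_(i+1) = b_i[y_(i+1)]: one block ω^m is spent to reach y_(i+1),
   and what remains, descended at the first element after y_(i+1), still dominates
   ω^m·b_(i+1) + ω^m.  Hence the construction only stops once Y is ω^n-large.  For
   exp-sparseness take m = 3: blocks ω, ω^2, ω^3 started at q end beyond 2q, 2^(q+1), 4^q. *)

Lemma fs_rcons0 (b : cnf) x : fs (rcons b 0) x = b.
Proof. by rewrite /fs rev_rcons revK. Qed.

Lemma fs_rconsS (b : cnf) k x : fs (rcons b k.+1) x = b ++ nseq x k.
Proof. by rewrite /fs rev_rcons revK. Qed.

Lemma fs_cat (a b : cnf) x : b != [::] -> fs (a ++ b) x = a ++ fs b x.
Proof.
case/lastP: b => [|b k] // _; rewrite -rcons_cat.
by case: k => [|k]; rewrite ?fs_rcons0 ?fs_rconsS ?catA.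
Qed.

Lemma foldl_fs_nil L : foldl fs [::] L = [::].
Proof. by elim: L. Qed.

Lemma nseqSr n (x : nat) : nseq n.+1 x = rcons (nseq n x) x.
Proof. by rewrite -addn1 nseqD cats1. Qed.

Lemma nseq_split c c' (k : nat) : c <= c' -> nseq c' k = nseq c k ++ nseq (c' - c) k.
Proof. by move=> le_cc'; rewrite -nseqD subnKC. Qed.

Definition above (q : nat) (X : seq nat) : seq nat := [seq z <- X | q < z].

Lemma above_id q L : {in L, forall z, q < z} -> above q L = L.
Proof. by move=> gtL; apply/all_filterP/allP. Qed.

Lemma above_head q X x L : above q X = x :: L -> x \in X /\ q < x.
Proof.
move=> E; have : x \in above q X by rewrite E mem_head.
by rewrite mem_filter => /andP[].
Qed.

Lemma above_cons q z Z : above q (z :: Z) = if q < z then z :: above q Z else above q Z.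
Proof. by []. Qed.

Lemma size_above_lt X q x z : x \in X -> q < x -> x <= z ->
  size (above z X) < size (above q X).
Proof.
elim: X => // w X IH; rewrite inE !above_cons => /predU1P[<- | xX] qx xz.
  rewrite qx (ltnNge z x) xz /= ltnS !size_filter; apply: sub_count => v /= zv.
  exact: leq_ltn_trans (leq_trans (ltnW qx) xz) zv.
have lt_sz := IH xX qx xz; have qz := leq_trans qx xz.
case: ifP => zw; first by rewrite (ltn_trans qz zw).
by case: ifP => _ //=; rewrite ltnW.
Qed.

Fixpoint reach_seq (a : cnf) (q : nat) (L : seq nat) : option nat :=
  if a is [::] then Some q else
  if L is x :: L' then reach_seq (fs a x) x L' else None.

(* For sorted X, [reach X a q = Some r] iff r is the least element of X such that
   X ∩ (q, r] is a-large, with [r = q] when [a = 0]; it is [None] when X above q is not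
   a-large. *)
Definition reach (X : seq nat) (a : cnf) (q : nat) : option nat :=
  reach_seq a q (above q X).

Lemma large_reach_seq a q L : large a L = (reach_seq a q L != None).
Proof.
rewrite /large; elim: L a q => [|x L IH] [|k a] q //=.
by rewrite foldl_fs_nil.
Qed.

Lemma reach_nil X q : reach X [::] q = Some q.
Proof. by rewrite /reach; case: (above q X). Qed.

Lemma reach_seq_mem a q L r : a != [::] -> reach_seq a q L = Some r -> r \in L.
Proof.
elim: L a q => [|x L IH] [|k a] q //= _.
case E: (fs (k :: a) x) => [|k' a'] /=.
  by case: L {IH} => [|? ?] /= [->]; rewrite mem_head.
by move/IH; rewrite inE orbC => ->.
Qed.

Lemma reach_in X a q r : reach X a q = Some r -> a != [::] -> r \in X /\ q < r.
Proof. by move=> /reach_seq_mem + a0 => /(_ a0); rewrite mem_filter => /andP[]. Qed.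

Lemma reach_le X a q r : reach X a q = Some r -> q <= r.
Proof.
case: a => [|k a]; first by rewrite reach_nil => -[->].
by move/reach_in => /(_ isT) [_ /ltnW].
Qed.

Section Reach.
Variable X : seq nat.
Hypothesis sX : sorted ltn X.

Lemma above_ind (P : nat -> Prop) :
  (forall q, (forall x q', x \in X -> q < x -> x <= q' -> P q') -> P q) ->
  forall q, P q.
Proof.
move=> step q; move: {2}(size (above q X)).+1 (ltnSn (size (above q X))) => N.
elim: N q => // N IH q szq; apply: step => x q' xX qx xq'; apply: IH.
exact: leq_trans (size_above_lt xX qx xq') szq.
Qed.

Lemma above_next q x L : above q X = x :: L -> L = above x X.
Proof.
elim: X sX => // z Z IH sZ; have gtZ := order_path_min ltn_trans sZ.
rewrite above_cons; case: ifP => [qz [<- <-] | _ E].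
  rewrite above_cons ltnn !above_id // => w /(allP gtZ) //.
  exact: ltn_trans.
have [xZ _] := above_head E; rewrite above_cons ltnNge (ltnW (allP gtZ x xZ)) /=.
exact: IH (path_sorted sZ) E.
Qed.

Lemma above_head_min q x L z : above q X = x :: L -> z \in above q X -> x <= z.
Proof.
have : sorted ltn (above q X) by apply: sorted_filter => //; exact: ltn_trans.
move=> + E; rewrite E inE => /= /(order_path_min ltn_trans) /allP gtL.
by case/predU1P=> [-> // | /gtL /ltnW].
Qed.

Lemma above_head_le q q' x' L' : q <= q' -> above q' X = x' :: L' ->
  exists x L, above q X = x :: L /\ x <= x'.
Proof.
move=> qq' E'; have [x'X q'x'] := above_head E'.
have x'_above : x' \in above q X by rewrite mem_filter x'X (leq_ltn_trans qq' q'x').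
case E: (above q X) => [|x L]; first by rewrite E in x'_above.
by exists x, L; split; last exact: above_head_min E x'_above.
Qed.

Lemma reach_rcons b k q : reach X (rcons b k) q =
  if above q X is x :: _ then reach X (fs (rcons b k) x) x else None.
Proof.
rewrite /reach; case: b => [|k' b]; case E: (above q X) => [|x L] //=;
  by rewrite -(above_next E).
Qed.

(* [fs] acts on the last (smallest) term, so the segment for [b] comes first. *)
Lemma reach_cat a b q :
  reach X (a ++ b) q = if reach X b q is Some z then reach X a z else None.
Proof.
elim/above_ind: q a b => q IH a b.
case/lastP: b => [|b k]; first by rewrite cats0 reach_nil.
rewrite -rcons_cat !reach_rcons; case E: (above q X) => [|x L] //.
have [xX qx] := above_head E.
by rewrite rcons_cat fs_cat ?(IH x x xX qx) //; case: (b).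
Qed.

Lemma reach_start_mono a q q' r' : q <= q' -> reach X a q' = Some r' ->
  exists2 r, reach X a q = Some r & r <= r'.
Proof.
elim/above_ind: q a q' r' => q IH a q' r' qq'.
case/lastP: a => [|b k]; first by rewrite !reach_nil => -[<-]; exists q.
rewrite !reach_rcons; case E': (above q' X) => [|x' L'] // Hr'.
have [x [L [E xx']]] := above_head_le qq' E'; rewrite E.
have [xX qx] := above_head E; have IHx := IH x x xX qx (leqnn x).
case: k Hr' => [|j]; rewrite ?fs_rcons0 ?fs_rconsS => Hr'; first exact: IHx Hr'.
rewrite (nseq_split _ xx') catA reach_cat in Hr'.
case E2: (reach X (nseq (x' - x) j) x') Hr' => [z|] // Hr'.
exact: IHx _ _ _ (leq_trans xx' (reach_le E2)) Hr'.
Qed.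

Lemma reach_nseq_mono c c' k k' q q' r' : c <= c' -> k <= k' -> q <= q' ->
  reach X (nseq c' k') q' = Some r' -> exists2 r, reach X (nseq c k) q = Some r & r <= r'.
Proof.
elim/above_ind: q c c' k k' q' r' => q IH [|c] c' k k' q' r' cc' kk' qq' Hr'.
  by exists q; rewrite ?reach_nil // (leq_trans qq' (reach_le Hr')).
case: c' cc' Hr' => [|c'] //; rewrite ltnS => cc' Hr'.
rewrite nseqSr reach_rcons in Hr'; rewrite nseqSr reach_rcons.
case E': (above q' X) Hr' => [|x' L'] // Hr'.
have [x [L [E xx']]] := above_head_le qq' E'; rewrite E.
have [xX qx] := above_head E; have IHx := IH x x xX qx (leqnn x).
case: k kk' => [|k] kk'; case: k' kk' Hr' => [|k'] // kk';
  rewrite ?fs_rcons0 ?fs_rconsS => Hr'.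
- exact: IHx Hr'.
- rewrite reach_cat in Hr'.
  case E2: (reach X (nseq x' k') x') Hr' => [z|] // Hr'.
  exact: IHx _ _ _ _ _ _ cc' (leq0n _) (leq_trans xx' (reach_le E2)) Hr'.
- rewrite reach_cat in Hr'; rewrite reach_cat.
  case E2: (reach X (nseq x' k') x') Hr' => [z'|] // Hr'.
  have [z Ez zz'] := IHx x x' k k' x' z' xx' kk' xx' E2; rewrite Ez.
  exact: IH x z xX qx (reach_le Ez) _ _ _ _ _ _ cc' kk' zz' Hr'.
Qed.

Lemma reach_cat_nseq_weaken g m d k x y r : y <= x -> 0 < d -> m <= k ->
  reach X (g ++ nseq d k) x = Some r -> exists r', reach X (g ++ [:: m]) y = Some r'.
Proof.
move=> yx d0 mk; rewrite !reach_cat.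
case Ez: (reach X (nseq d k) x) => [z|] // Hr.
have [w Hw wz] := reach_nseq_mono d0 mk yx Ez; rewrite Hw.
by have [r' -> _] := reach_start_mono wz Hr; exists r'.
Qed.

Lemma reach_nseq0_ge c q r : reach X (nseq c 0) q = Some r -> q + c <= r.
Proof.
elim: c q => [|c IH] q; first by rewrite reach_nil addn0 => -[->].
rewrite nseqSr -cats1 reach_cat.
case Ew: (reach X [:: 0] q) => [w|] // /IH; have [_ qw] := reach_in Ew isT.
by move=> le_r; rewrite addnS -addSn (leq_trans _ le_r) // leq_add2r.
Qed.

Lemma reach_omega1_ge q r : reach X [:: 1] q = Some r -> q.*2 <= r.
Proof.
rewrite (reach_rcons [::]); case E: (above q X) => [|x L] // /reach_nseq0_ge.
have [_ qx] := above_head E; rewrite -addnn; apply: leq_trans.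
by rewrite leq_add // ltnW.
Qed.

Lemma reach_nseq1_ge c q r : reach X (nseq c 1) q = Some r -> 2 ^ c * q <= r.
Proof.
elim: c q => [|c IH] q; first by rewrite reach_nil mul1n => -[->].
rewrite nseqSr -cats1 reach_cat.
case Ew: (reach X [:: 1] q) => [w|] // /IH; apply: leq_trans.
by rewrite expnSr -mulnA leq_mul2l mul2n reach_omega1_ge ?orbT.
Qed.

Lemma reach_omega2_ge q r : reach X [:: 2] q = Some r -> 2 ^ q.+1 <= r.
Proof.
rewrite (reach_rcons [::]); case E: (above q X) => [|x L] // /reach_nseq1_ge.
have [_ qx] := above_head E; apply: leq_trans.
by rewrite -[2 ^ q.+1]muln1 leq_mul ?leq_exp2l // (leq_ltn_trans _ qx).
Qed.

Lemma reach_omega3_gt q r : 0 < q -> reach X [:: 3] q = Some r -> 4 ^ q < r.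
Proof.
move=> q0; rewrite (reach_rcons [::]); case E: (above q X) => [|x L] // Hr.
have [_ qx] := above_head E.
have [r' Hr' r'r] := reach_nseq_mono (leq_ltn_trans q0 qx) (leqnn 2) (leqnn x) Hr.
move: Hr'; rewrite -[nseq 2 2]/([:: 2] ++ [:: 2]) reach_cat.
case Ew: (reach X [:: 2] x) => [w|] // /reach_omega2_ge le_r'.
apply: leq_trans r'r; apply: leq_trans le_r'.
rewrite -[4]/(2 ^ 2) -expnM ltn_exp2l // ltnS.
apply: leq_trans (reach_omega2_ge Ew); rewrite expnS leq_mul2l /=.
exact: ltnW (ltn_trans qx (ltn_expl x (isT : 1 < 2))).
Qed.

End Reach.

Lemma reach_subset X X' a q r : sorted ltn X -> sorted ltn X' ->
  reach X a q = Some r -> {in X, forall z, q < z <= r -> z \in X'} ->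
  exists2 r', reach X' a q = Some r' & r' <= r.
Proof.
move=> sX sX'; elim/(@above_ind X): q a r => q IH a r.
case/lastP: a => [|b k] Hr sub.
  by move: Hr; rewrite !reach_nil => -[<-]; exists q.
move: Hr; rewrite (reach_rcons sX) (reach_rcons sX').
case E: (above q X) => [|x L] // Hr.
have [xX qx] := above_head E.
have x_above' : x \in above q X'.
  by rewrite mem_filter qx sub // qx (reach_le Hr).
case E': (above q X') => [|x' L']; first by rewrite E' in x_above'.
have x'x := above_head_min sX' E' x_above'.
have [r1 Hr1 r1r] : exists2 r1, reach X' (fs (rcons b k) x) x = Some r1 & r1 <= r.
  apply: (IH x x xX qx (leqnn x) _ _ Hr) => z zX /andP[xz zr].
  by apply: sub; rewrite // (ltn_trans qx xz) zr.
case: k {Hr} Hr1 => [|j]; rewrite ?fs_rcons0 ?fs_rconsS => Hr1.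
  have [r2 -> r2r1] := reach_start_mono sX' x'x Hr1.
  by exists r2; last exact: leq_trans r2r1 r1r.
rewrite (nseq_split _ x'x) catA (reach_cat sX') in Hr1.
case Ew: (reach X' (nseq (x - x') j) x) Hr1 => [w|] // Hr1.
have [r2 -> r2r1] := reach_start_mono sX' (leq_trans x'x (reach_le Ew)) Hr1.
by exists r2; last exact: leq_trans r2r1 r1r.
Qed.

Lemma mem_interval_oc x y z : (z \in interval_oc x y) = (x < z <= y).
Proof. by rewrite mem_iota; apply/idP/idP => /andP[? ?]; apply/andP; lia. Qed.

Lemma sorted_interval_oc x y : sorted ltn (interval_oc x y).
Proof. exact: iota_ltn_sorted. Qed.

Lemma large_interval_oc a x y :
  large a (interval_oc x y) = (reach (interval_oc x y) a x != None).
Proof.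
rewrite /reach above_id -?large_reach_seq // => z.
by rewrite mem_interval_oc => /andP[].
Qed.

Lemma large_interval_oc_reach X a x y : sorted ltn X ->
  reach X a x = Some y -> large a (interval_oc x y).
Proof.
move=> sX Ey; rewrite large_interval_oc.
have sub : {in X, forall z, x < z <= y -> z \in interval_oc x y}.
  by move=> z _; rewrite mem_interval_oc.
by have [r' -> _] := reach_subset sX (sorted_interval_oc x y) Ey sub.
Qed.

Lemma large_interval_ocW a x y y' : y <= y' ->
  large a (interval_oc x y) -> large a (interval_oc x y').
Proof.
move=> yy'; rewrite !large_interval_oc.
case E: (reach _ a x) => [r|] // _.
have sub : {in interval_oc x y, forall z, x < z <= r -> z \in interval_oc x y'}.
  by move=> z; rewrite !mem_interval_oc => /andP[xz zy] _; rewrite xz (leq_trans zy yy').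
by have [r' -> _] := reach_subset (sorted_interval_oc x y) (sorted_interval_oc x y') E sub.
Qed.

Lemma large_omega3_interval_gt x y : 0 < x ->
  large (cnf_omega 3) (interval_oc x y) -> 4 ^ x < y.
Proof.
move=> x0; rewrite large_interval_oc; case E: (reach _ _ x) => [r|] // _.
have [+ _] := reach_in E isT; rewrite mem_interval_oc => /andP[_].
exact/leq_trans/(reach_omega3_gt (sorted_interval_oc x y) x0 E).
Qed.

Definition gap (a : cnf) (x y : nat) : bool := (x < y) && large a (interval_oc x y).

Lemma gap_trans a : transitive (gap a).
Proof.
move=> y x z /andP[xy lxy] /andP[yz _]; rewrite /gap (ltn_trans xy yz).
exact: large_interval_ocW (ltnW yz) lxy.
Qed.

Lemma path_gap_sparse a p Y : path (gap a) p Y -> sparse a (p :: Y).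
Proof.
rewrite -[path _ _ _]/(sorted (gap a) (p :: Y)) (sorted_pairwise (@gap_trans a)).
elim: (p :: Y) => // z s IH /= /andP[/allP gap_z /IH sp] x y.
rewrite !inE => /predU1P[-> | xs] /predU1P[-> | ys] xy.
- by rewrite ltnn in xy.
- by case/andP: (gap_z y ys).
- by case/andP: (gap_z x xs) => /(ltn_trans xy); rewrite ltnn.
- exact: sp.
Qed.

(* ω^m·a, since ω^m·ω^k = ω^(k+m). *)
Definition omega_mul (m : nat) (a : cnf) : cnf := [seq k + m | k <- a].

Lemma gap_path_of_reach X m a p r : sorted ltn X ->
  reach X (omega_mul m a ++ [:: m]) p = Some r ->
  exists Y, [/\ path (gap [:: m]) p Y, {subset Y <= X} & large a Y].
Proof.
move=> sX; elim/(@above_ind X): p a r => p IH a r.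
case/lastP: a => [|b k]; first by exists [::].
rewrite /omega_mul map_rcons -/(omega_mul m b) (reach_cat sX).
case Ey: (reach X [:: m] p) => [y|] // Hr.
have [yX py] := reach_in Ey isT.
have gap_py : gap [:: m] p y by rewrite /gap py (large_interval_oc_reach sX Ey).
suff [Y [gapY subY largeY]] : exists Y,
    [/\ path (gap [:: m]) y Y, {subset Y <= X} & large (fs (rcons b k) y) Y].
  exists (y :: Y); split => //=; first by rewrite gap_py.
  by move=> z /predU1P[-> | /subY].
have IHy := IH y y yX py (leqnn y).
case: k Hr => [|j] Hr; rewrite ?fs_rcons0 ?fs_rconsS.
  by rewrite add0n -cats1 in Hr; exact: IHy Hr.
rewrite addSn (reach_rcons sX) in Hr.
case E: (above y X) Hr => [|x L] // Hr.
have [_ yx] := above_head E; have d0 : 0 < x - y by rewrite subn_gt0.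
(* At the next point x > y the last term ω^(j+m+1) becomes ω^(j+m)·x, which dominates
   ω^(j+m)·y + ω^m. *)
rewrite fs_rconsS (nseq_split _ (ltnW yx)) catA in Hr.
have [r' Hr'] := reach_cat_nseq_weaken sX (ltnW yx) d0 (leq_addl j m) Hr.
have e : omega_mul m b ++ nseq y (j + m) = omega_mul m (b ++ nseq y j).
  by rewrite /omega_mul map_cat map_nseq.
by rewrite e in Hr'; exact: IHy Hr'.
Qed.

Lemma large_sparse_subset n m X : sorted ltn X ->
  large (cnf_succ (cnf_omega (n + m))) X ->
  exists Y, [/\ sorted ltn Y, {subset Y <= X},
                large (cnf_omega n) Y & sparse (cnf_omega m) Y].
Proof.
case: X => [|x0 X] // sX lX.
have above_x0 : above x0 (x0 :: X) = X.
  rewrite above_cons ltnn above_id // => z.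
  exact: (allP (order_path_min ltn_trans sX)).
have {lX} : reach (x0 :: X) [:: n + m] x0 != None.
  by move: lX; rewrite /large /= -/(large _ X) (large_reach_seq _ x0) /reach above_x0.
case Er : (reach _ _ x0) => [r|] // _.
case: n Er => [|n] Er.
  exists [:: x0]; split => //; last exact: (@path_gap_sparse _ x0 [::]).
  by move=> z /predU1P[-> | //]; rewrite mem_head.
rewrite addSn (reach_rcons sX [::]) above_x0 in Er.
case: X sX above_x0 Er => [|x1 X] // sX above_x0 Er.
have [_ x01] := above_head above_x0.
rewrite fs_rconsS cat0s (nseq_split _ (ltnW x01)) in Er.
have d0 : 0 < x1 - x0 by rewrite subn_gt0.
have [r' Hr'] := reach_cat_nseq_weaken sX (ltnW x01) d0 (leq_addl n m) Er.
have e : nseq x0 (n + m) = omega_mul m (nseq x0 n) by rewrite /omega_mul map_nseq.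
rewrite e in Hr'; have [Y [gapY subY largeY]] := gap_path_of_reach sX Hr'.
have gap_lt : subrel (gap [:: m]) ltn by move=> ? ? /andP[].
exists (x0 :: Y); split => //.
- exact: sub_path gap_lt _ _ gapY.
- by move=> z /predU1P[-> | /subY //]; rewrite mem_head.
- exact: path_gap_sparse gapY.
Qed.

Theorem lemma2p1 (n m : nat) :
  (forall X : seq nat, sorted ltn X ->
     large (cnf_succ (cnf_omega (n + m))) X ->
     (forall x, x \in X -> 3 <= x) ->
     exists Y : seq nat, [/\ sorted ltn Y, {subset Y <= X},
                           large (cnf_omega n) Y & sparse (cnf_omega m) Y])
  /\
  (forall X : seq nat, sorted ltn X ->
     large (cnf_succ (cnf_omega (n + 3))) X ->
     (forall x, x \in X -> 3 <= x) ->
     exists Y : seq nat, [/\ sorted ltn Y, {subset Y <= X},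
                           large (cnf_omega n) Y & exp_sparse Y]).
Proof.
split=> X sX lX ge3; first exact: large_sparse_subset.
have [Y [sY subY lY spY]] := large_sparse_subset sX lX.
exists Y; split => //; split=> [x /subY/ge3 // | x y xY yY xy].
apply: large_omega3_interval_gt (spY x y xY yY xy).
exact: leq_trans (ge3 x (subY x xY)).
Qed.
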